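(* Let $G$ be a finite simple graph. If $\tau^*_2(G) \leq 2\nu(G)$ and $\tau^*_3(G) \leq 2\nu(G)$, then $\tau^*_k(G) \leq 2\nu(G)$ for all integers $k \geq 2$.
   Context: A triangle of $G$ is a set of three pairwise adjacent vertices, identified with its three edges. $\nu(G)$ is the maximum number of pairwise edge-disjoint triangles in $G$. For an integer $k\ge1$, a $k$-multi-transversal of $G$ is a multiset $F$ of edges such that every triangle of $G$ contains at least $k$ elements of $F$ (counted with multiplicity); $\tau^*_k(G)$ is the minimum of $|F|/k$ over all $k$-multi-transversals $F$. *)

From mathcomp Require Import all_boot all_order all_algebra.
Set Implicit Arguments. Unset Strict Implicit. Unset Printing Implicit Defensive.
Import Order.TTheory GRing.Theory Num.Theory.

Section Triangles.
Variables (V : finType) (adj : rel V).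

Definition simple_graph : Prop := symmetric adj /\ irreflexive adj.

Definition is_edge (e : {set V}) : bool :=
  [exists u, exists v, adj u v && (e == [set u; v])].

Definition is_triangle (t : {set V}) : bool :=
  (#|t| == 3) && [forall u in t, forall v in t, (u != v) ==> adj u v].

Definition tri_edges (t : {set V}) : {set {set V}} :=
  [set e in powerset t | #|e| == 2].

Definition edge_disjoint_triangles (S : {set {set V}}) : bool :=
  [forall t in S, is_triangle t] &&
  [forall t1 in S, forall t2 in S,
     (t1 != t2) ==> [disjoint tri_edges t1 & tri_edges t2]].

Definition nu : nat :=
  \max_(S : {set {set V}} | edge_disjoint_triangles S) #|S|.

(* There is a k-multi-transversal (a multiset of edges, given by a
   multiplicity function) of cardinality exactly n.  Multiplicities are
   taken in 'I_n.+1, which loses nothing since the total size is n. *)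
Definition has_kmt_of_size (k n : nat) : bool :=
  [exists F : {ffun {set V} -> 'I_n.+1},
     [&& [forall e, ~~ is_edge e ==> (F e == ord0)],
         [forall t, is_triangle t ==>
                      (k <= \sum_(e in tri_edges t) (F e : nat))%N]
       & (\sum_(e : {set V}) (F e : nat) == n)]].

(* Trivial upper bound for the minimum: every edge with multiplicity k. *)
Definition kmt_bound (k : nat) : nat := k * #|[set e : {set V} | is_edge e]|.

(* Minimum cardinality of a k-multi-transversal (the minimum is <= kmt_bound k,
   which is attained, so restricting the search to n <= kmt_bound k is exact). *)
Definition min_kmt (k : nat) : nat :=
  \big[minn/kmt_bound k]_(n < (kmt_bound k).+1 | has_kmt_of_size k n) n.

Definition tau_star (k : nat) : rat := ((min_kmt k)%:R / k%:R)%R.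

End Triangles.

From mathcomp Require Import all_boot all_order all_algebra zify.
Set Implicit Arguments. Unset Strict Implicit. Unset Printing Implicit Defensive.
Import Order.TTheory GRing.Theory Num.Theory.

(* Adding a k1-multi-transversal to a k2-multi-transversal edge by edge gives a
   (k1 + k2)-multi-transversal, so the minimum size |F| of a k-multi-transversal
   is subadditive in k.  Every k >= 2 is a sum of 2s and 3s, hence
   min |F_k| <= 2 nu k follows from the cases k = 2 and k = 3. *)

Lemma subadditive_le_linear (f : nat -> nat) (c : nat) :
  (forall m n, f (m + n) <= f m + f n) -> f 2 <= c * 2 -> f 3 <= c * 3 ->
  forall k, 2 <= k -> f k <= c * k.
Proof.
move=> f_subadd f2 f3; elim/ltn_ind=> k IHk k_ge2.
have [k_le3 | k_gt3] := leqP k 3.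
  by case: k k_ge2 k_le3 {IHk} => [|[|[|[|]]]].
rewrite -(subnK k_ge2) mulnDr.
apply: leq_trans (f_subadd _ _) (leq_add (IHk _ _ _) f2); lia.
Qed.

Section MultiTransversals.
Variables (V : finType) (adj : rel V).

Lemma triangle_has_edge (t : {set V}) :
  is_triangle adj t -> exists2 e, e \in tri_edges t & is_edge adj e.
Proof.
case/andP=> /eqP card_t /forall_inP adj_t.
have /card_gt1P [u [v [tu tv uv]]] : 1 < #|t| by rewrite card_t.
exists [set u; v].
  by rewrite inE powersetE subUset !sub1set tu tv cards2 uv.
have adj_uv : adj u v := implyP (forall_inP (adj_t u tu) v tv) uv.
by apply/existsP; exists u; apply/existsP; exists v; rewrite adj_uv eqxx.
Qed.

Lemma has_kmt_bound (k : nat) : has_kmt_of_size adj k (kmt_bound adj k).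
Proof.
have le_bound e : k * is_edge adj e <= kmt_bound adj k.
  rewrite leq_mul2l; case: (boolP (is_edge adj e)) => [e_edge|_]; last by rewrite orbT.
  by apply/orP; right; apply/card_gt0P; exists e; rewrite inE.
pose F : {ffun {set V} -> 'I_(kmt_bound adj k).+1} :=
  [ffun e => inord (k * is_edge adj e)].
have FE e : F e = k * is_edge adj e :> nat by rewrite ffunE inordK // ltnS.
apply/existsP; exists F; apply/and3P; split.
- apply/forall_inP=> e /negbTE e_nedge.
  by apply/eqP/val_inj; rewrite /= FE e_nedge muln0.
- apply/forall_inP=> t /triangle_has_edge [e te e_edge].
  by rewrite (bigD1 e) //= FE e_edge muln1 leq_addr.
- rewrite (eq_bigr _ (fun e _ => FE e)) -big_distrr /= -big_mkcondr /=.
  by rewrite sum1_card /kmt_bound (eq_card (in_set _)).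
Qed.

Lemma has_kmt_min_kmt (k : nat) : has_kmt_of_size adj k (min_kmt adj k).
Proof.
apply: (big_ind (has_kmt_of_size adj k)) => //; first exact: has_kmt_bound.
by move=> m n; rewrite /minn; case: ifP.
Qed.

Lemma min_kmt_le (k n : nat) : has_kmt_of_size adj k n -> min_kmt adj k <= n.
Proof.
move=> kmt_n; have [n_le | n_gt] := leqP n (kmt_bound adj k).
  have n_lt : n < (kmt_bound adj k).+1 by rewrite ltnS.
  have := bigmin_le_cond (kmt_bound adj k) (j := Ordinal n_lt)
    (P := fun i => has_kmt_of_size adj k i) val kmt_n.
  by rewrite minEnat.
apply/ltnW/(leq_ltn_trans _ n_gt).
have := bigmin_le_id (index_enum _) (kmt_bound adj k)
  (fun i : 'I_(kmt_bound adj k).+1 => has_kmt_of_size adj k i) val.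
by rewrite minEnat.
Qed.

Lemma has_kmt_add (k1 n1 k2 n2 : nat) :
  has_kmt_of_size adj k1 n1 -> has_kmt_of_size adj k2 n2 ->
  has_kmt_of_size adj (k1 + k2) (n1 + n2).
Proof.
move=> /existsP [F1 /and3P [/forallP E1 /forallP T1 /eqP S1]].
move=> /existsP [F2 /and3P [/forallP E2 /forallP T2 /eqP S2]].
have F12_lt e : (F1 e : nat) + F2 e < (n1 + n2).+1.
  by rewrite ltnS leq_add // -ltnS.
pose F : {ffun {set V} -> 'I_(n1 + n2).+1} := [ffun e => inord (F1 e + F2 e)].
have FE e : F e = F1 e + F2 e :> nat by rewrite ffunE inordK.
apply/existsP; exists F; apply/and3P; split.
- apply/forall_inP=> e e_nedge; apply/eqP/val_inj.
  by rewrite /= FE (eqP (implyP (E1 e) e_nedge)) (eqP (implyP (E2 e) e_nedge)).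
- apply/forall_inP=> t t_tri; rewrite (eq_bigr _ (fun e _ => FE e)) big_split.
  exact: leq_add (implyP (T1 t) t_tri) (implyP (T2 t) t_tri).
- by rewrite (eq_bigr _ (fun e _ => FE e)) big_split /= S1 S2.
Qed.

Lemma min_kmt_subadd (k1 k2 : nat) :
  min_kmt adj (k1 + k2) <= min_kmt adj k1 + min_kmt adj k2.
Proof. exact/min_kmt_le/has_kmt_add/has_kmt_min_kmt/has_kmt_min_kmt. Qed.

Lemma tau_star_le_nat (k m : nat) :
  0 < k -> (tau_star adj k <= m%:R)%R = (min_kmt adj k <= m * k).
Proof. by move=> k_gt0; rewrite ler_pdivrMr ?ltr0n // -natrM ler_nat. Qed.

End MultiTransversals.

Theorem proposition3 (V : finType) (adj : rel V) :
  simple_graph adj ->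
  (tau_star adj 2 <= 2 * (nu adj)%:R)%R ->
  (tau_star adj 3 <= 2 * (nu adj)%:R)%R ->
  forall k : nat, (2 <= k)%N -> (tau_star adj k <= 2 * (nu adj)%:R)%R.
Proof.
move=> _; rewrite -natrM !tau_star_le_nat // => tau2 tau3 k k_ge2.
rewrite tau_star_le_nat; last exact: leq_trans k_ge2.
exact: subadditive_le_linear (min_kmt_subadd adj) tau2 tau3 k k_ge2.
Qed.
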